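(* Let $S\subseteq\{0,1,\dots,\omega\}$ and $\alpha\in\{0,1,\dots,\omega\}\setminus S$. Every RC$_S$-model $(W,(R_\beta)_{\beta\in S},v)$ can be expanded, by adding a suitable relation $R_\alpha$ on $W$ (keeping $W$, the relations $R_\beta$ and the valuation $v$ unchanged), to an RC$_{S\cup\{\alpha\}}$-model.
   Context: A Kripke model for signature $S$: nonempty $W$, relations $(R_\beta)_{\beta\in S}$, valuation. An RC$_S$-frame satisfies, for all $\beta,\gamma\in S$: $R_\beta R_\gamma\subseteq R_{\min(\beta,\gamma)}$ (polytransitivity); if $\beta>\gamma$ then $xR_\beta y$ and $xR_\gamma z$ imply $yR_\gamma z$ (condition J); and $R_\beta\subseteq R_\gamma$ whenever $\gamma<\beta$ (monotonicity). An RC$_S$-model is a Kripke model on an RC$_S$-frame. *)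

From Stdlib Require Import Arith.

Inductive idx : Type :=
| Fin : nat -> idx
| Omega : idx.

Definition idx_lt (a b : idx) : Prop :=
  match a, b with
  | Fin n, Fin m => n < m
  | Fin _, Omega => True
  | Omega, _ => False
  end.

Definition idx_min (a b : idx) : idx :=
  match a, b with
  | Fin n, Fin m => Fin (Nat.min n m)
  | Fin n, Omega => Fin n
  | Omega, b => b
  end.

Definition idx_eq_dec (a b : idx) : {a = b} + {a <> b}.
Proof. decide equality; apply Nat.eq_dec. Defined.

Definition RCframe (S : idx -> Prop) (W : Type) (R : idx -> W -> W -> Prop) : Prop :=
  (forall b g, S b -> S g -> forall x y z, R b x y -> R g y z -> R (idx_min b g) x z) /\
  (forall b g, S b -> S g -> idx_lt g b ->
     forall x y z, R b x y -> R g x z -> R g y z) /\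
  (forall b g, S b -> S g -> idx_lt g b -> forall x y, R b x y -> R g x y).

Definition RCmodel (S : idx -> Prop) (W : Type) (R : idx -> W -> W -> Prop)
  (v : nat -> W -> Prop) : Prop :=
  inhabited W /\ RCframe S W R.

Definition expand (W : Type) (R : idx -> W -> W -> Prop) (a : idx)
  (Ra : W -> W -> Prop) : idx -> W -> W -> Prop :=
  fun b => if idx_eq_dec b a then Ra else R b.

From Stdlib Require Import Arith Lia Classical.

(* Polytransitivity is redundant in the presence of monotonicity:
   a family of relations indexed by {0,...,omega} is an RC-frame as soon as
   every relation is transitive and conditions J and monotonicity hold
   (RCframe_of_trans_mono).  So to add a new index a to an RC_S-frame it is
   enough to find a transitive R_a satisfying J and monotonicity against the
   old relations.  We take
     x R_a y  iff  x R_g y for every g in S below a, and, if g is the largest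
                   element of S below a, every R_g-successor of x is an
                   R_g-successor of y.
   Monotonicity downwards is the first clause; monotonicity and J from above
   follow from J and monotonicity of the old frame; J towards an index g below
   a follows from J for a larger g' in S below a if there is one, and from the
   second clause otherwise. *)

Lemma idx_lt_trans (a b c : idx) : idx_lt a b -> idx_lt b c -> idx_lt a c.
Proof. destruct a, b, c; simpl; intuition lia. Qed.

Lemma idx_lt_irrefl (a : idx) : ~ idx_lt a a.
Proof. destruct a; simpl; lia. Qed.

Lemma idx_lt_trichotomy (a b : idx) : idx_lt a b \/ a = b \/ idx_lt b a.
Proof.
  destruct a as [n|], b as [m|]; simpl; auto.
  destruct (lt_eq_lt_dec n m) as [[H|H]|H]; subst; auto.
Qed.

Lemma idx_min_diag (a : idx) : idx_min a a = a.
Proof. destruct a; simpl; [rewrite Nat.min_id|]; reflexivity. Qed.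

Lemma idx_min_l (a b : idx) : idx_lt a b -> idx_min a b = a.
Proof. destruct a as [n|], b as [m|]; simpl; intros; try tauto; f_equal; lia. Qed.

Lemma idx_min_r (a b : idx) : idx_lt b a -> idx_min a b = b.
Proof. destruct a as [n|], b as [m|]; simpl; intros; try tauto; f_equal; lia. Qed.

Definition transitive_on (T : idx -> Prop) (W : Type) (R : idx -> W -> W -> Prop)
  : Prop :=
  forall b, T b -> forall x y z, R b x y -> R b y z -> R b x z.

(* Polytransitivity with b = g: the relations of an RC-frame are transitive. *)
Lemma RCframe_transitive (T : idx -> Prop) (W : Type) (R : idx -> W -> W -> Prop) :
  RCframe T W R -> transitive_on T W R.
Proof.
  intros [Hpoly _] b Hb x y z Hxy Hyz.
  rewrite <- (idx_min_diag b). eauto.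
Qed.

(* Conversely, transitivity and monotonicity give polytransitivity: the
   relation with the larger index is included in the one with the smaller. *)
Lemma RCframe_of_trans_mono (T : idx -> Prop) (W : Type) (R : idx -> W -> W -> Prop) :
  transitive_on T W R ->
  (forall b g, T b -> T g -> idx_lt g b ->
     forall x y z, R b x y -> R g x z -> R g y z) ->
  (forall b g, T b -> T g -> idx_lt g b -> forall x y, R b x y -> R g x y) ->
  RCframe T W R.
Proof.
  intros Htrans HJ Hmono. split; [|split; assumption].
  intros b g Hb Hg x y z Hxy Hyz.
  destruct (idx_lt_trichotomy b g) as [Hlt | [<- | Hlt]].
  - rewrite (idx_min_l _ _ Hlt).
    exact (Htrans b Hb x y z Hxy (Hmono g b Hg Hb Hlt y z Hyz)).
  - rewrite idx_min_diag. eauto.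
  - rewrite (idx_min_r _ _ Hlt).
    exact (Htrans g Hg x y z (Hmono b g Hb Hg Hlt x y Hxy) Hyz).
Qed.

Section Expansion.

Variables (S : idx -> Prop) (W : Type) (R : idx -> W -> W -> Prop) (a : idx).
Hypothesis a_new : ~ S a.
Hypothesis R_trans : transitive_on S W R.
Hypothesis R_J : forall b g, S b -> S g -> idx_lt g b ->
  forall x y z, R b x y -> R g x z -> R g y z.
Hypothesis R_mono : forall b g, S b -> S g -> idx_lt g b ->
  forall x y, R b x y -> R g x y.

Definition below (g : idx) : Prop := S g /\ idx_lt g a.

Definition maximal_below (g : idx) : Prop :=
  below g /\ forall g', below g' -> ~ idx_lt g g'.

Definition Ra (x y : W) : Prop :=
  (forall g, below g -> R g x y) /\
  (forall g, maximal_below g -> forall z, R g x z -> R g y z).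

Lemma Ra_below (g : idx) (x y : W) : below g -> Ra x y -> R g x y.
Proof. intros Hg [Hdown _]. exact (Hdown g Hg). Qed.

Lemma Ra_above (b : idx) (x y : W) : S b -> idx_lt a b -> R b x y -> Ra x y.
Proof.
  intros Hb Hab Hxy. split.
  - intros g [Hg Hga]. exact (R_mono b g Hb Hg (idx_lt_trans _ _ _ Hga Hab) x y Hxy).
  - intros g [[Hg Hga] _] z Hxz.
    exact (R_J b g Hb Hg (idx_lt_trans _ _ _ Hga Hab) x y z Hxy Hxz).
Qed.

Lemma Ra_trans (x y z : W) : Ra x y -> Ra y z -> Ra x z.
Proof.
  intros [Hxy_down Hxy_max] [Hyz_down Hyz_max]. split.
  - intros g Hbelow.
    exact (R_trans g (proj1 Hbelow) x y z (Hxy_down g Hbelow) (Hyz_down g Hbelow)).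
  - intros g Hmax u Hxu. apply Hyz_max, Hxy_max; assumption.
Qed.

(* Condition J for the pair (a, g) with g below a: use a larger g' below a
   when one exists, and the second clause of Ra when g is maximal. *)
Lemma Ra_J_below (g : idx) (x y z : W) : below g -> Ra x y -> R g x z -> R g y z.
Proof.
  intros [Hg Hga] Hxy Hxz.
  destruct (classic (exists g', below g' /\ idx_lt g g')) as [[g' [Hg' Hgg']] | Hnone].
  - exact (R_J g' g (proj1 Hg') Hg Hgg' x y z (Ra_below g' x y Hg' Hxy) Hxz).
  - apply (proj2 Hxy g); [|exact Hxz].
    split; [now split|]. intros g' Hg' Hgg'. apply Hnone. eauto.
Qed.

Lemma Ra_J_above (b : idx) (x y z : W) :
  S b -> idx_lt a b -> R b x y -> Ra x z -> Ra y z.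
Proof.
  intros Hb Hab Hxy [Hxz_down Hxz_max]. split.
  - intros g [Hg Hga].
    exact (R_J b g Hb Hg (idx_lt_trans _ _ _ Hga Hab) x y z Hxy (Hxz_down g (conj Hg Hga))).
  - intros g Hmax u Hyu. apply Hxz_max; [exact Hmax|].
    destruct Hmax as [[Hg Hga] _].
    apply (R_trans g Hg x y u); [|exact Hyu].
    exact (R_mono b g Hb Hg (idx_lt_trans _ _ _ Hga Hab) x y Hxy).
Qed.

Let E : idx -> W -> W -> Prop := expand W R a Ra.

Lemma expand_new : E a = Ra.
Proof. unfold E, expand. destruct (idx_eq_dec a a); congruence. Qed.

Lemma expand_old (b : idx) : S b -> E b = R b.
Proof.
  intros Hb. unfold E, expand.
  destruct (idx_eq_dec b a) as [->|]; [contradiction | reflexivity].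
Qed.

Lemma expand_trans : transitive_on (fun b => S b \/ b = a) W E.
Proof.
  intros b [Hb | ->].
  - rewrite (expand_old b Hb). exact (R_trans b Hb).
  - rewrite expand_new. exact Ra_trans.
Qed.

Lemma expand_J (b g : idx) : S b \/ b = a -> S g \/ g = a -> idx_lt g b ->
  forall x y z, E b x y -> E g x z -> E g y z.
Proof.
  intros [Hb | ->] [Hg | ->] Hgb x y z.
  - rewrite (expand_old b Hb), (expand_old g Hg). exact (R_J b g Hb Hg Hgb x y z).
  - rewrite (expand_old b Hb), expand_new. exact (Ra_J_above b x y z Hb Hgb).
  - rewrite expand_new, (expand_old g Hg). exact (Ra_J_below g x y z (conj Hg Hgb)).
  - now apply idx_lt_irrefl in Hgb.
Qed.

Lemma expand_mono (b g : idx) : S b \/ b = a -> S g \/ g = a -> idx_lt g b ->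
  forall x y, E b x y -> E g x y.
Proof.
  intros [Hb | ->] [Hg | ->] Hgb x y.
  - rewrite (expand_old b Hb), (expand_old g Hg). exact (R_mono b g Hb Hg Hgb x y).
  - rewrite (expand_old b Hb), expand_new. exact (Ra_above b x y Hb Hgb).
  - rewrite expand_new, (expand_old g Hg). exact (Ra_below g x y (conj Hg Hgb)).
  - now apply idx_lt_irrefl in Hgb.
Qed.

Lemma expand_RCframe : RCframe (fun b => S b \/ b = a) W E.
Proof.
  apply RCframe_of_trans_mono.
  - exact expand_trans.
  - exact expand_J.
  - exact expand_mono.
Qed.

End Expansion.

Theorem lemma4p4 (S : idx -> Prop) (a : idx) (ha : ~ S a)
  (W : Type) (R : idx -> W -> W -> Prop) (v : nat -> W -> Prop) :
  RCmodel S W R v ->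
  exists Ra : W -> W -> Prop,
    RCmodel (fun b => S b \/ b = a) W (expand W R a Ra) v.
Proof.
  intros [HW Hframe].
  exists (Ra S W R a). split; [exact HW|].
  pose proof (RCframe_transitive S W R Hframe) as Htrans.
  destruct Hframe as (_ & HJ & Hmono).
  exact (expand_RCframe S W R a ha Htrans HJ Hmono).
Qed.
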